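(* Let $X$ be a nonempty set and $G\le S_X$. If $G$ is rack admissible then $\bigcup_{x\in X/G}(C_G(G_x))^G$ generates $G$. If $G$ is quandle admissible then $\bigcup_{x\in X/G}Z(G_x)^G$ generates $G$.
   Context: Permutations act on the right; for a subset $H\subseteq G$ and $g\in G$, $H^g=g^{-1}Hg$ and $H^G=\bigcup_{g\in G}H^g$. For $G\le S_X$, $G_x$ is the stabilizer of $x$, and $X/G$ a complete set of orbit representatives; $C_G(H)$ is the centralizer and $Z(H)$ the center. A rack is a groupoid $(X,* )$ whose left translations $L_x$ ($y\mapsto x*y$) are bijections and which satisfies $x*(y*z)=(x*y)*(x*z)$; a quandle is a rack with $x*x=x$. $\mathrm{LMlt}(X,* )=\langle L_x:x\in X\rangle$. A subgroup $G\le S_X$ is rack admissible (resp. quandle admissible) if there is a rack (resp. quandle) $(X,* )$ with $\mathrm{LMlt}(X,* )=G$. *)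

(* Permutations act on the right: x^(fg) = (x^f)^g,
   so the product f*g is the function  fun x => g (f x). *)
Set Implicit Arguments.

Section PermGroups.
Variable X : Type.

Definition inverse_of (f g : X -> X) : Prop :=
  (forall x, g (f x) = x) /\ (forall x, f (g x) = x).

Definition is_perm (f : X -> X) : Prop := exists g, inverse_of f g.

Definition pmul (f g : X -> X) : X -> X := fun x => g (f x).

Definition perm_subgroup (G : (X -> X) -> Prop) : Prop :=
  (forall f, G f -> is_perm f) /\
  G (fun x => x) /\
  (forall f g, G f -> G g -> G (pmul f g)) /\
  (forall f g, G f -> inverse_of f g -> G g).

Definition generates (S G : (X -> X) -> Prop) : Prop :=
  (forall f, S f -> G f) /\
  (forall H, perm_subgroup H -> (forall f, S f -> H f) -> forall f, G f -> H f).

Definition stabilizer (G : (X -> X) -> Prop) (x : X) : (X -> X) -> Prop :=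
  fun g => G g /\ g x = x.

Definition centralizer (G H : (X -> X) -> Prop) : (X -> X) -> Prop :=
  fun g => G g /\ forall h, H h -> pmul g h = pmul h g.

Definition center (H : (X -> X) -> Prop) : (X -> X) -> Prop :=
  centralizer H H.

Definition conj_closure (H G : (X -> X) -> Prop) : (X -> X) -> Prop :=
  fun k => exists g ginv h, G g /\ inverse_of g ginv /\ H h /\
                            k = pmul (pmul ginv h) g.

Definition orbit_transversal (G : (X -> X) -> Prop) (R : X -> Prop) : Prop :=
  (forall x, exists r, R r /\ exists g, G g /\ g r = x) /\
  (forall r1 r2, R r1 -> R r2 -> (exists g, G g /\ g r1 = r2) -> r1 = r2).

(* racks and quandles; L_x = op x is the left translation y |-> x * y *)
Definition is_rack (op : X -> X -> X) : Prop :=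
  (forall x, is_perm (op x)) /\
  (forall x y z, op x (op y z) = op (op x y) (op x z)).

Definition is_quandle (op : X -> X -> X) : Prop :=
  is_rack op /\ (forall x, op x x = x).

Definition left_translations (op : X -> X -> X) : (X -> X) -> Prop :=
  fun f => exists x, f = op x.

Definition rack_admissible (G : (X -> X) -> Prop) : Prop :=
  exists op, is_rack op /\ generates (left_translations op) G.

Definition quandle_admissible (G : (X -> X) -> Prop) : Prop :=
  exists op, is_quandle op /\ generates (left_translations op) G.

End PermGroups.

(* Every element of G = LMlt(X, * ) is an automorphism of the rack, since the
   generators L_x are (self-distributivity) and automorphisms form a group.
   Hence L_(x^g) = g^-1 L_x g, and an h fixing r commutes with L_r, i.e. L_r
   lies in C_G(G_r); for a quandle moreover L_r r = r, so L_r lies in Z(G_r).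
   Writing x = r^g with r the representative of the orbit of x, each generator
   L_x is thus a G-conjugate of L_r, so these conjugacy classes generate G. *)
From Stdlib Require Import FunctionalExtensionality.

Set Implicit Arguments.

Section Generation.
Variable X : Type.

Lemma generates_intermediate (A S G : (X -> X) -> Prop) :
  generates A G -> (forall f, A f -> S f) -> (forall f, S f -> G f) ->
  generates S G.
Proof.
  intros [_ hmin] hAS hSG; split; [exact hSG|].
  intros H hH hSH; apply hmin; auto.
Qed.

Lemma conj_closure_sub (G H : (X -> X) -> Prop) :
  perm_subgroup G -> (forall f, H f -> G f) ->
  forall f, conj_closure H G f -> G f.
Proof.
  intros (_ & _ & hmul & hinv) hHG f (g & ginv & h & Gg & ginvg & Hh & ->).
  apply hmul; [apply hmul|]; auto.
  exact (hinv g ginv Gg ginvg).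
Qed.

End Generation.

Section RackMorphisms.
Variables (X : Type) (op : X -> X -> X).

Definition is_rack_morphism (g : X -> X) : Prop :=
  forall a b, g (op a b) = op (g a) (g b).

Lemma rack_morphism_pmul f g :
  is_rack_morphism f -> is_rack_morphism g -> is_rack_morphism (pmul f g).
Proof. intros hf hg a b; unfold pmul; rewrite hf, hg; reflexivity. Qed.

Lemma rack_morphism_inverse f g :
  is_rack_morphism f -> inverse_of f g -> is_rack_morphism g.
Proof.
  intros hf [gf fg] a b.
  rewrite <- (gf (op (g a) (g b))), hf, !fg; reflexivity.
Qed.

Lemma left_translation_rack_morphism x :
  is_rack op -> is_rack_morphism (op x).
Proof. intros [_ hdistr] a b; apply hdistr. Qed.

Lemma rack_morphism_subgroup (G : (X -> X) -> Prop) :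
  perm_subgroup G -> perm_subgroup (fun f => G f /\ is_rack_morphism f).
Proof.
  intros (hperm & hid & hmul & hinv); split; [|split; [|split]].
  - intros f [Gf _]; auto.
  - split; [exact hid|]; intros a b; reflexivity.
  - intros f g [Gf hf] [Gg hg]; split; auto using rack_morphism_pmul.
  - intros f g [Gf hf] fg; split; [exact (hinv f g Gf fg)|].
    exact (rack_morphism_inverse hf fg).
Qed.

Lemma LMlt_rack_morphism (G : (X -> X) -> Prop) g :
  perm_subgroup G -> is_rack op -> generates (left_translations op) G ->
  G g -> is_rack_morphism g.
Proof.
  intros hG hrack [hLG hmin] Gg.
  refine (proj2 (hmin _ (rack_morphism_subgroup hG) _ g Gg)).
  intros f [x ->]; split.
  - apply hLG; exists x; reflexivity.
  - exact (left_translation_rack_morphism x hrack).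
Qed.

Lemma rack_morphism_conj_left_translation g ginv x :
  is_rack_morphism g -> inverse_of g ginv ->
  op (g x) = pmul (pmul ginv (op x)) g.
Proof.
  intros hg [_ gginv]; apply functional_extensionality; intro y.
  unfold pmul; rewrite hg, gginv; reflexivity.
Qed.

Lemma rack_morphism_fixing_commutes h r :
  is_rack_morphism h -> h r = r -> pmul (op r) h = pmul h (op r).
Proof.
  intros hh hr; apply functional_extensionality; intro y.
  unfold pmul; rewrite hh, hr; reflexivity.
Qed.

End RackMorphisms.

Section LeftMultiplicationGroup.
Variables (X : Type) (G : (X -> X) -> Prop) (op : X -> X -> X).
Hypotheses (hG : perm_subgroup G) (hrack : is_rack op)
  (hgen : generates (left_translations op) G).

Let G_rack_morphism {g} : G g -> is_rack_morphism op g :=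
  LMlt_rack_morphism g hG hrack hgen.

Lemma left_translation_in_LMlt x : G (op x).
Proof. apply (proj1 hgen); exists x; reflexivity. Qed.

Lemma left_translation_centralizes_stabilizer r :
  centralizer G (stabilizer G r) (op r).
Proof.
  split; [exact (left_translation_in_LMlt r)|].
  intros h [Gh hr]; exact (rack_morphism_fixing_commutes (G_rack_morphism Gh) hr).
Qed.

Lemma left_translation_center_stabilizer r :
  op r r = r -> center (stabilizer G r) (op r).
Proof.
  intros hidem; split.
  - split; [exact (left_translation_in_LMlt r)|exact hidem].
  - intros h hh; apply left_translation_centralizes_stabilizer; exact hh.
Qed.

Lemma left_translations_in_conj_closure (R : X -> Prop)
  (K : X -> (X -> X) -> Prop) :
  orbit_transversal G R -> (forall r, K r (op r)) ->
  forall f, left_translations op f -> exists r, R r /\ conj_closure (K r) G f.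
Proof.
  intros [hcover _] hK f [x ->].
  destruct (hcover x) as (r & Rr & g & Gg & <-).
  destruct (proj1 hG g Gg) as [ginv ginvg].
  exists r; split; [exact Rr|].
  exists g, ginv, (op r); refine (conj Gg (conj ginvg (conj (hK r) _))).
  exact (rack_morphism_conj_left_translation r (G_rack_morphism Gg) ginvg).
Qed.

End LeftMultiplicationGroup.

Theorem proposition3p7 (X : Type) (hX : inhabited X)
  (G : (X -> X) -> Prop) (hG : perm_subgroup G)
  (R : X -> Prop) (hR : orbit_transversal G R) :
  (rack_admissible G ->
     generates (fun f => exists r, R r /\
                  conj_closure (centralizer G (stabilizer G r)) G f) G) /\
  (quandle_admissible G ->
     generates (fun f => exists r, R r /\
                  conj_closure (center (stabilizer G r)) G f) G).
Proof.
  split.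
  - intros (op & hrack & hgen).
    apply (generates_intermediate _ hgen).
    + apply (left_translations_in_conj_closure hG hrack hgen _ hR).
      exact (left_translation_centralizes_stabilizer hG hrack hgen).
    + intros f (r & _ & hf); refine (conj_closure_sub hG _ hf).
      intros g [Gg _]; exact Gg.
  - intros (op & [hrack hidem] & hgen).
    apply (generates_intermediate _ hgen).
    + apply (left_translations_in_conj_closure hG hrack hgen _ hR).
      intro r; exact (left_translation_center_stabilizer hG hrack hgen (hidem r)).
    + intros f (r & _ & hf); refine (conj_closure_sub hG _ hf).
      intros g [[Gg _] _]; exact Gg.
Qed.
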